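(* Let $k\ge 1$ and $r\ge 2$ be integers and let $d_1\ge d_2\ge \cdots\ge d_k$ be positive integers. Then for all sufficiently large $n$, $$ex_r\Big(n,\bigcup_{i=1}^k S^+_{d_i}\Big)=\max_{1\le i\le k}\left\{\binom{n}{r}-\binom{n-i+1}{r}+ex_r\big(n-i+1,S^+_{d_i}\big)\right\}.$$
   Context: For a family (or single) $r$-uniform hypergraph $\mathcal F$, $ex_r(n,\mathcal F)$ denotes the maximum number of hyperedges in an $n$-vertex $r$-uniform hypergraph containing no member of $\mathcal F$ as a (not necessarily induced) subhypergraph. $S_\ell$ denotes the star $K_{1,\ell}$ with $\ell$ edges. For a graph $F$ and $r\ge 2$, the expansion $F^+$ is the $r$-uniform hypergraph obtained from $F$ by adding $r-2$ new vertices to each edge, all added vertices being distinct (so for $r=2$, $F^+=F$). $\bigcup_{i=1}^k S^+_{d_i}$ denotes the vertex-disjoint union of the hypergraphs $S^+_{d_1},\dots,S^+_{d_k}$. *)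

From mathcomp Require Import all_boot.
Set Warnings "-notation-overridden".
Set Implicit Arguments. Unset Strict Implicit. Unset Printing Implicit Defensive.

(* A hypergraph is represented by its edge set; its vertex set is the cover
   of its edges (no isolated vertices). Host hypergraphs live on 'I_n. *)

Definition uniform (V : finType) (r : nat) (H : {set {set V}}) : bool :=
  [forall e in H, #|e| == r].

Definition contains (V W : finType) (F : {set {set V}}) (H : {set {set W}}) : bool :=
  [exists f : {ffun V -> W},
     [forall x in cover F, forall y in cover F, (f x == f y) ==> (x == y)] &&
     [forall e in F, (f @: e) \in H]].

Definition ex (r n : nat) (V : finType) (F : {set {set V}}) : nat :=
  \max_(H : {set {set 'I_n}} | uniform r H && ~~ contains F H) #|H|.

(* Expansion S_d^+ of the star K_{1,d}: center None, petal j consists of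
   the leaf (j,0) and the r-2 new vertices (j,1),...,(j,r-2). *)
Definition star_vert (d r : nat) : finType := option ('I_d * 'I_r.-1).

Definition star_edge (d r : nat) (j : 'I_d) : {set star_vert d r} :=
  None |: [set Some (j, t) | t : 'I_r.-1].

Definition star_exp (r d : nat) : {set {set star_vert d r}} :=
  [set @star_edge d r j | j : 'I_d].

(* Vertex-disjoint union of S^+_{d_0}, ..., S^+_{d_{k-1}}. *)
Definition ustar_vert (r k : nat) (d : 'I_k -> nat) : finType :=
  {i : 'I_k & star_vert (d i) r}.

Definition ustar_exp (r k : nat) (d : 'I_k -> nat) : {set {set ustar_vert r d}} :=
  \bigcup_(i < k)
     [set [set (Tagged (fun i0 => star_vert (d i0) r) v : ustar_vert r d) | v in e]
     | e : {set star_vert (d i) r} in star_exp r (d i)].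

From mathcomp Require Import all_boot zify.
Set Implicit Arguments. Unset Strict Implicit. Unset Printing Implicit Defensive.

(* Let s be the number of vertices of the forest and D := s * C(n, r-2). At most
   #|U| * C(n, r-2) edges through a vertex v meet a set U not containing v, so a
   vertex of degree > D is the centre of a copy of S^+_d avoiding any set of fewer
   than s prescribed vertices: vertices of high degree can be used as centres in a
   greedy embedding. Hence a forest-free H has b < k such vertices, and the stars
   S^+_{d_b}, ..., S^+_{d_{k-1}} cannot all be found disjointly among the edges H'
   avoiding them. At most C(n,r) - C(n-b,r) edges meet the high vertices. If H' is
   S^+_{d_b}-free this gives the b-th term. Otherwise delete the vertices of a copy
   of S^+_{d_b}, then repeatedly those of a copy of S^+_{d_{b+1}}; each deletion
   costs at most s * D edges since the deleted vertices have low degree, and after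
   fewer than k deletions what is left is S^+_{d_{b+1}}-free on n-b-1 vertices. The
   loss k * s * D is absorbed by C(n-b,r) - C(n-b-1,r) = C(n-b-1,r-1) for large n,
   which gives the (b+1)-th term.
   For the lower bound take all r-sets meeting a fixed i-set L together with an
   extremal S^+_{d_i}-free hypergraph on the other n-i vertices: each of the i+1
   stars S^+_{d_0}, ..., S^+_{d_i} of a copy of the forest would need a vertex in L. *)

Lemma disjointP (T : finType) (A B : {set T}) :
  reflect (forall x, x \in A -> x \in B -> False) [disjoint A & B].
Proof.
apply: (iffP idP) => [AB x xA xB | h]; first by rewrite (disjointFr AB xA) in xB.
by apply/pred0P => x /=; apply/negbTE/andP => -[]; exact: h.
Qed.

Lemma leq_card_bigcup (T I : finType) (P : {pred I}) (F : I -> {set T}) :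
  #|\bigcup_(i in P) F i| <= \sum_(i in P) #|F i|.
Proof.
elim/big_rec2: _ => [|i x y _ hxy]; first by rewrite cards0.
by apply: leq_trans (leq_card_setU _ _) _; rewrite leq_add2l.
Qed.

Lemma mem_nth_enum (T : finType) (A : {set T}) x0 t :
  t < #|A| -> nth x0 (enum A) t \in A.
Proof. by move=> tA; rewrite -mem_enum mem_nth // -cardE. Qed.

Lemma imset_nth_enum (T : finType) (A : {set T}) m x0 :
  #|A| = m -> [set nth x0 (enum A) t | t : 'I_m] = A.
Proof.
move=> Am; apply/setP => x; apply/imsetP/idP => [[t _ ->] | xA].
  by apply: mem_nth_enum; rewrite Am.
have xm : index x (enum A) < m by rewrite -Am cardE index_mem mem_enum.
by exists (Ordinal xm); rewrite //= nth_index ?mem_enum.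
Qed.

Lemma card_ord_lt n m : m <= n -> #|[set x : 'I_n | x < m]| = m.
Proof.
move=> mn; have widen_inj : injective (widen_ord mn) by move=> x y [] /val_inj.
rewrite -[RHS](card_ord m) -(card_imset _ widen_inj).
apply: eq_card => x; rewrite inE; apply/idP/imsetP => [xm | [y _ ->]]; last by rewrite /= ltn_ord.
by exists (Ordinal xm) => //; exact: val_inj.
Qed.

Lemma uniformP (T : finType) r (H : {set {set T}}) :
  reflect (forall e, e \in H -> #|e| = r) (uniform r H).
Proof. by apply: (iffP forall_inP) => hH e /hH => [/eqP | ->]. Qed.

Lemma uniform_card (T : finType) r (H : {set {set T}}) e :
  uniform r H -> e \in H -> #|e| = r.
Proof. by move/uniformP; apply. Qed.

Lemma uniform_subset (T : finType) r (G H : {set {set T}}) :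
  G \subset H -> uniform r H -> uniform r G.
Proof. by move=> GH /uniformP hH; apply/uniformP => e /(subsetP GH) /hH. Qed.

Lemma containsP (V W : finType) (F : {set {set V}}) (G : {set {set W}}) :
  reflect (exists f : {ffun V -> W},
             {in cover F &, injective f} /\ forall e, e \in F -> f @: e \in G)
          (contains F G).
Proof.
apply: (iffP existsP) => [[f /andP [/forallP finj /forallP fE]] | [f [finj fE]]].
  exists f; split=> [x y xF yF fxy | e eF]; last by have := fE e; rewrite eF.
  by move: (finj x); rewrite xF => /forall_inP/(_ y yF); rewrite fxy eqxx => /eqP.
exists f; apply/andP; split; apply/forall_inP => x xF; last exact: fE.
by apply/forall_inP => y yF; apply/implyP => /eqP /finj ->.
Qed.

Lemma contains_subset (V W : finType) (F : {set {set V}}) (G1 G2 : {set {set W}}) :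
  G1 \subset G2 -> contains F G1 -> contains F G2.
Proof.
move=> G12 /containsP [f [finj fE]]; apply/containsP; exists f; split=> // e eF.
exact: subsetP G12 _ (fE e eF).
Qed.

Section Stars.
Variables (T : finType) (r : nat).
Implicit Types (H G : {set {set T}}) (c x : T) (P : nat -> {set T}) (m : nat).

(* The petals are c |: P j for j < m; they are indexed by nat so that a petal can
   be appended (star_in_add_petal). *)
Definition star_in H c P m : Prop :=
  (forall j, j < m -> [/\ #|P j| = r.-1, c \notin P j & c |: P j \in H]) /\
  (forall j j', j < m -> j' < m -> j != j' -> [disjoint P j & P j']).

Definition star_verts c P m : {set T} := c |: \bigcup_(j < m) P j.

Lemma star_verts_center c P m : c \in star_verts c P m.
Proof. exact: setU11. Qed.

Lemma star_verts_petal c P m j x : j < m -> x \in P j -> x \in star_verts c P m.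
Proof. by move=> jm xP; rewrite setU1r //; apply/bigcupP; exists (Ordinal jm). Qed.

Lemma star_vertsP c P m x :
  reflect (x = c \/ exists2 j, j < m & x \in P j) (x \in star_verts c P m).
Proof.
apply: (iffP setU1P) => -[-> | xP]; [by left | right | by left | right].
  by case/bigcupP: xP => j _ xP; exists j.
by case: xP => j jm xP; apply/bigcupP; exists (Ordinal jm).
Qed.

Lemma star_verts_leq c P m m' : m' <= m -> star_verts c P m' \subset star_verts c P m.
Proof.
move=> m'm; apply/subsetP => x /star_vertsP [-> | [j jm' xP]].
  exact: star_verts_center.
exact: star_verts_petal (leq_trans jm' m'm) xP.
Qed.

Lemma card_petals H c P m : star_in H c P m -> #|\bigcup_(j < m) P j| <= r.-1 * m.
Proof.
case=> hP _; apply: leq_trans (leq_card_bigcup _ _) _.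
rewrite (eq_bigr (fun _ => r.-1)) => [|j _]; last by case: (hP j (ltn_ord j)).
by rewrite sum_nat_const card_ord mulnC.
Qed.

Lemma card_star_verts H c P m : star_in H c P m -> #|star_verts c P m| <= 1 + r.-1 * m.
Proof.
by move=> hS; apply: leq_trans (leq_card_setU _ _) _; rewrite cards1 leq_add2l (card_petals hS).
Qed.

Lemma star_in_subset G H c P m : G \subset H -> star_in G c P m -> star_in H c P m.
Proof.
move=> GH [hP hD]; split=> // j jm; have [? ? ?] := hP j jm; split=> //.
exact: subsetP GH _ _.
Qed.

Lemma star_in_leq H c P m m' : m' <= m -> star_in H c P m -> star_in H c P m'.
Proof.
move=> m'm [hP hD]; split=> [j jm' | j j' jm' j'm']; first exact: hP (leq_trans jm' m'm).
exact: hD (leq_trans jm' m'm) (leq_trans j'm' m'm).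
Qed.

Lemma star_in_add_petal H c P m e :
  star_in H c P m -> e \in H -> c \in e -> #|e| = r ->
  [disjoint e & \bigcup_(j < m) P j] ->
  star_in H c [eta P with m |-> e :\ c] m.+1.
Proof.
move=> [hP hD] eH ce er eP.
have eP' j : j < m -> [disjoint e :\ c & P j].
  move=> jm; apply: disjointWl (subsetDl e [set c]) _.
  exact: disjointWr (bigcup_sup (Ordinal jm) isT) eP.
split=> [j | j j'] /=.
  rewrite ltnS leq_eqVlt => /predU1P [-> | jm]; last by rewrite (ltn_eqF jm); exact: hP.
  by rewrite eqxx setD11 setD1K // -er (cardsD1 c e) ce add1n.
rewrite !ltnS (leq_eqVlt j) (leq_eqVlt j') => /predU1P [-> | jm] /predU1P [-> | j'm].
all: rewrite ?eqxx ?(ltn_eqF jm) ?(ltn_eqF j'm) //.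
- by move=> _; apply: eP'.
- by move=> _; rewrite disjoint_sym; apply: eP'.
- exact: hD.
Qed.

Lemma star_in_disjoint H c P m (X : {set T}) :
  star_in H c P m -> 0 < m -> (forall e, e \in H -> [disjoint e & X]) ->
  [disjoint star_verts c P m & X].
Proof.
case=> hP _ m_gt0 HX; apply/disjointP => x /star_vertsP xV.
have [e eH xe] : exists2 e, e \in H & x \in e.
  case: xV => [-> | [j jm xP]].
    by have [_ _ ?] := hP 0 m_gt0; exists (c |: P 0); rewrite ?setU11.
  by have [_ _ ?] := hP j jm; exists (c |: P j); rewrite ?setU1r.
by move/disjointP: (HX e eH); apply.
Qed.

Lemma cover_star_exp m (x : star_vert m r) : 0 < m -> x \in cover (star_exp r m).
Proof.
move=> m_gt0; apply/bigcupP; case: x => [[j t] |].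
  by exists (star_edge r j); [apply: imset_f | rewrite setU1r //; apply: imset_f].
by exists (star_edge r (Ordinal m_gt0)); [apply: imset_f | rewrite setU11].
Qed.

Lemma star_exp_neq0 m : 0 < m -> star_exp r m != set0.
Proof. by move=> m_gt0; apply/set0Pn; exists (star_edge r (Ordinal m_gt0)); apply: imset_f. Qed.

Lemma star_in_of_contains H m :
  0 < m -> contains (star_exp r m) H -> exists c P, star_in H c P m.
Proof.
move=> m_gt0 /containsP [f [finj0 fE]].
have finj : injective f by move=> x y; apply: finj0; apply: cover_star_exp.
pose j0 : 'I_m := Ordinal m_gt0.
pose P j := [set f (Some (insubd j0 j, t)) | t : 'I_r.-1].
have valP j : j < m -> val (insubd j0 j) = j by move=> jm; rewrite val_insubd jm.
exists (f None), P; split=> [j jm | j j' jm j'm]; first split.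
- by rewrite card_imset ?card_ord // => t t' /finj [].
- by apply/imsetP => -[t _ /finj].
- have := fE (star_edge r (insubd j0 j)) (imset_f _ _).
  by rewrite /star_edge imsetU1 -imset_comp; apply.
apply: contraNT => /pred0Pn [x /andP [/imsetP [t _ ->] /imsetP [t' _ /finj [e _]]]].
by rewrite -(valP j jm) -(valP j' j'm) e.
Qed.

End Stars.

Definition ustar_order (r k : nat) (d : 'I_k -> nat) : nat := \sum_(i < k) (1 + r.-1 * d i).

Lemma star_order_le r k (d : 'I_k -> nat) i : 1 + r.-1 * d i <= ustar_order r d.
Proof. by rewrite /ustar_order (bigD1 i) //= leq_addr. Qed.

Section Families.
Variables (T : finType) (r k : nat) (d : 'I_k -> nat) (H : {set {set T}}).
Implicit Types (I : {set 'I_k}) (c : 'I_k -> T) (P : 'I_k -> nat -> {set T}).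

Definition star_family I c P : Prop :=
  (forall i, i \in I -> star_in r H (c i) (P i) (d i)) /\
  (forall i i', i \in I -> i' \in I -> i != i' ->
     [disjoint star_verts (c i) (P i) (d i) & star_verts (c i') (P i') (d i')]).

Definition family_verts I c P : {set T} := \bigcup_(i in I) star_verts (c i) (P i) (d i).

Lemma star_family1 i0 c P :
  star_in r H (c i0) (P i0) (d i0) -> star_family [set i0] c P.
Proof. by move=> hS; split=> [i /set1P -> | i i' /set1P -> /set1P ->]; rewrite ?eqxx. Qed.

Lemma family_verts1 i0 c P : family_verts [set i0] c P = star_verts (c i0) (P i0) (d i0).
Proof. exact: big_set1. Qed.

Lemma star_verts_sub_family I c P i :
  i \in I -> star_verts (c i) (P i) (d i) \subset family_verts I c P.
Proof. exact: bigcup_sup. Qed.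

Lemma family_verts_setU1 I c P i0 (c0 : T) (P0 : nat -> {set T}) : i0 \notin I ->
  family_verts (i0 |: I) [eta c with i0 |-> c0] [eta P with i0 |-> P0] =
  star_verts c0 P0 (d i0) :|: family_verts I c P.
Proof.
move=> i0I; rewrite /family_verts big_setU1 //= eqxx; congr (_ :|: _).
apply: eq_bigr => i iI /=; suff -> : (i == i0) = false by [].
by apply/eqP => ii0; rewrite -ii0 iI in i0I.
Qed.

Lemma star_family_setU1 I c P i0 (c0 : T) (P0 : nat -> {set T}) :
  i0 \notin I -> star_family I c P -> star_in r H c0 P0 (d i0) ->
  [disjoint star_verts c0 P0 (d i0) & family_verts I c P] ->
  star_family (i0 |: I) [eta c with i0 |-> c0] [eta P with i0 |-> P0].
Proof.
move=> i0I [hS hD] hS0 hV0.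
have neq i : i \in I -> (i == i0) = false.
  by move=> iI; apply/eqP => ii0; rewrite -ii0 iI in i0I.
have V0i i : i \in I -> [disjoint star_verts c0 P0 (d i0) & star_verts (c i) (P i) (d i)].
  by move=> iI; apply: disjointWr hV0; apply: star_verts_sub_family.
split=> [i | i i'] /=; rewrite !in_setU1.
  by case/predU1P => [-> | iI]; rewrite ?eqxx ?(neq i) //; apply: hS.
case/predU1P => [-> | iI] /predU1P [-> | i'I]; rewrite ?eqxx ?(neq i) ?(neq i') //.
- by move=> _; apply: V0i.
- by move=> _; rewrite disjoint_sym; apply: V0i.
- exact: hD.
Qed.

Lemma card_star_verts_le_order (v : T) (Q : nat -> {set T}) i :
  star_in r H v Q (d i) -> #|star_verts v Q (d i)| <= ustar_order r d.
Proof. by move/card_star_verts/leq_trans; apply; apply: star_order_le. Qed.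

Lemma card_family_verts I c P :
  star_family I c P -> #|family_verts I c P| <= \sum_(i in I) (1 + r.-1 * d i).
Proof.
case=> hS _; apply: leq_trans (leq_card_bigcup _ _) _.
by apply: leq_sum => i iI; apply: card_star_verts (hS i iI).
Qed.

Lemma ustar_order_setC I :
  ustar_order r d = \sum_(i in I) (1 + r.-1 * d i) + \sum_(i in ~: I) (1 + r.-1 * d i).
Proof.
rewrite /ustar_order (bigID (mem I)) /=; congr (_ + _).
by apply: eq_bigl => i; rewrite in_setC.
Qed.

Lemma card_family_centers I c P (z : 'I_k -> T) i0 :
  star_family I c P -> i0 \in ~: I ->
  #|family_verts I c P :|: z @: (~: I :\ i0)| + r.-1 * d i0 <= ustar_order r d.
Proof.
move=> hF i0I; rewrite (ustar_order_setC I) (big_setD1 _ i0I) /=.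
have hz : #|z @: (~: I :\ i0)| <= \sum_(i in ~: I :\ i0) (1 + r.-1 * d i).
  apply: leq_trans (leq_imset_card _ _) _; rewrite -sum1_card.
  by apply: leq_sum => i _; apply: leq_addr.
have hU : #|family_verts I c P :|: z @: (~: I :\ i0)|
    <= #|family_verts I c P| + #|z @: (~: I :\ i0)| := leq_card_setU _ _.
apply: leq_trans (leq_add hU (leqnn _)) _; rewrite -addnA leq_add ?card_family_verts //.
by rewrite addnC (addnC 1) -addnA leq_add2l (leq_trans hz) ?leq_addl.
Qed.

Section Embedding.
Variables (c : 'I_k -> T) (P : 'I_k -> nat -> {set T}).
Hypothesis hF : star_family setT c P.

Definition ustar_embedding (x : ustar_vert r d) : T :=
  let: existT i v := x in
  if v is Some (j, t) then nth (c i) (enum (P i j)) t else c i.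

Lemma card_petal i (j : 'I_(d i)) : #|P i j| = r.-1.
Proof. by case: (hF.1 i (in_setT i)) => hP _; case: (hP j (ltn_ord j)). Qed.

Lemma ustar_embedding_in i v :
  ustar_embedding (existT _ i v) \in star_verts (c i) (P i) (d i).
Proof.
case: v => [[j t] |] /=; last exact: star_verts_center.
by apply: (star_verts_petal _ (ltn_ord j)); apply: mem_nth_enum; rewrite card_petal.
Qed.

Lemma ustar_embedding_inj : injective ustar_embedding.
Proof.
case=> i v [] i' v' ef.
case: (eqVneq i i') => [ii' | ii']; last first.
  have := hF.2 i i' (in_setT i) (in_setT i') ii'; move/disjointP/(_ _ (ustar_embedding_in v)).
  by rewrite ef ustar_embedding_in => /(_ isT).
subst i'; have [hP hD] := hF.1 i (in_setT i); congr existT.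
case: v v' ef => [[j t] |] [[j' t'] |] //= ef.
- case: (eqVneq j j') ef => [<- | jj'] ef.
    congr (Some (_, _)); apply: val_inj; move/eqP: ef.
    by rewrite nth_uniq ?enum_uniq -?cardE ?card_petal // => /eqP.
  have := hD j j' (ltn_ord j) (ltn_ord j') jj'.
  move/disjointP/(_ (nth (c i) (enum (P i j)) t)); rewrite mem_nth_enum ?card_petal //.
  by rewrite ef mem_nth_enum ?card_petal // => /(_ isT isT).
- have [_ cP _] := hP j (ltn_ord j).
  by move: cP; rewrite -ef mem_nth_enum ?card_petal.
- have [_ cP _] := hP j' (ltn_ord j').
  by move: cP; rewrite ef mem_nth_enum ?card_petal.
Qed.

Lemma contains_of_star_family : contains (ustar_exp r d) H.
Proof.
apply/containsP; exists (finfun ustar_embedding); split.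
  by move=> x y _ _; rewrite !ffunE => /ustar_embedding_inj.
move=> e /bigcupP [i _ /imsetP [e0 /imsetP [j _ ->] ->]].
have [_ _ cPH] := (hF.1 i (in_setT i)).1 j (ltn_ord j).
rewrite -imset_comp /star_edge imsetU1 -imset_comp /= ffunE /=.
rewrite (_ : [set _ | x : 'I_r.-1] = P i j) //.
rewrite -[RHS](imset_nth_enum (c i) (card_petal j)).
by apply: eq_imset => t; rewrite /= ffunE.
Qed.

End Embedding.

End Families.

Definition degree (T : finType) (H : {set {set T}}) (v : T) : nat := #|[set e in H | v \in e]|.

Lemma card_le_avoiding (T : finType) (H S : {set {set T}}) (V : {set T}) D :
  S \subset H -> {in V, forall u, degree H u <= D} ->
  #|S| <= #|[set e in S | [disjoint e & V]]| + #|V| * D.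
Proof.
move=> SH VD.
have sub : S \subset [set e in S | [disjoint e & V]] :|: \bigcup_(u in V) [set e in H | u \in e].
  apply/subsetP => e eS; rewrite inE.
  have [eV | /pred0Pn [u /andP [ue uV]]] := boolP [disjoint e & V].
    by rewrite inE eS eV.
  by apply/orP; right; apply/bigcupP; exists u => //; rewrite inE (subsetP SH _ eS).
apply: leq_trans (subset_leq_card sub) _; apply: leq_trans (leq_card_setU _ _) _.
rewrite leq_add2l -sum_nat_const; apply: leq_trans (leq_card_bigcup _ _) _.
exact: leq_sum.
Qed.

Lemma card_avoiding_setU (T : finType) (H : {set {set T}}) (X V : {set T}) D :
  {in V, forall u, degree H u <= D} ->
  #|[set e in H | [disjoint e & X]]| <= #|[set e in H | [disjoint e & X :|: V]]| + #|V| * D.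
Proof.
move=> VD; set S := [set e in H | [disjoint e & X]].
have SH : S \subset H by apply/subsetP => e; rewrite inE => /andP [].
apply: leq_trans (card_le_avoiding SH VD) _; rewrite leq_add2r subset_leq_card //.
apply/subsetP => e; rewrite !inE => /andP [/andP [eH eX] eV].
by rewrite eH disjoints_subset setCU subsetI -!disjoints_subset eX eV.
Qed.

Section Degrees.
Variables (T : finType) (r : nat) (H : {set {set T}}).
Hypothesis H_uniform : uniform r H.

Lemma card_edges_through2 (u v : T) : u != v ->
  #|[set e in H | (v \in e) && (u \in e)]| <= 'C(#|T|, r.-2).
Proof.
move=> uv; set E := [set e in H | _].
have uvE e : e \in E -> [set u; v] \subset e.
  by rewrite inE => /and3P [_ ve ue]; rewrite subUset !sub1set ue ve.
have uvK e : e \in E -> [set u; v] :|: (e :\: [set u; v]) = e.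
  by move=> /uvE uve; rewrite -{2}(setID e [set u; v]) (setIidPr uve).
have inj : {in E &, injective (fun e => e :\: [set u; v])}.
  by move=> e1 e2 E1 E2 /= e12; rewrite -(uvK e1 E1) -(uvK e2 E2) e12.
rewrite -(card_in_imset inj) -card_draws subset_leq_card //.
apply/subsetP => _ /imsetP [e eE ->]; rewrite inE cardsD (setIidPr (uvE e eE)).
by move: eE; rewrite inE => /andP [/(uniform_card H_uniform) -> _]; rewrite cards2 uv subn2.
Qed.

Lemma card_edges_meeting (v : T) (U : {set T}) : v \notin U ->
  #|[set e in H | (v \in e) && ~~ [disjoint e & U]]| <= #|U| * 'C(#|T|, r.-2).
Proof.
move=> vU.
have sub : [set e in H | (v \in e) && ~~ [disjoint e & U]] \subset
           \bigcup_(u in U) [set e in H | (v \in e) && (u \in e)].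
  apply/subsetP => e; rewrite inE => /and3P [eH ve /pred0Pn [u /andP [ue uU]]].
  by apply/bigcupP; exists u; rewrite // inE eH ve.
apply: leq_trans (subset_leq_card sub) _; apply: leq_trans (leq_card_bigcup _ _) _.
rewrite -sum_nat_const; apply: leq_sum => u uU; apply: card_edges_through2.
by apply: contraNneq vU => <-.
Qed.

Lemma edge_avoiding (v : T) (U : {set T}) :
  v \notin U -> #|U| * 'C(#|T|, r.-2) < degree H v ->
  exists2 e, e \in H & (v \in e) && [disjoint e & U].
Proof.
move=> vU hdeg.
have sub : [set e in H | v \in e] \subset [set e in H | (v \in e) && [disjoint e & U]]
                                     :|: [set e in H | (v \in e) && ~~ [disjoint e & U]].
  by apply/subsetP => e; rewrite !inE; case: (e \in H); case: (v \in e); case: [disjoint e & U].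
have := leq_trans (subset_leq_card sub) (leq_card_setU _ _).
have [-> | [e]] := set_0Vmem [set e in H | (v \in e) && [disjoint e & U]].
  rewrite cards0 add0n => hle.
  by move: hdeg; rewrite ltnNge (leq_trans hle (card_edges_meeting vU)).
by rewrite inE => /andP [eH veU] _; exists e.
Qed.

Lemma star_of_high_degree (v : T) (U : {set T}) m :
  v \notin U -> (#|U| + r.-1 * m) * 'C(#|T|, r.-2) < degree H v ->
  exists P, star_in r H v P m /\ [disjoint star_verts v P m & U].
Proof.
move=> vU; elim: m => [|m IH] hdeg.
  exists (fun _ => set0); split; first by split.
  by rewrite /star_verts big_ord0 setU0 disjoints1.
have [|P [hP PU]] := IH.
  by apply: leq_ltn_trans hdeg; rewrite leq_mul2r leq_add2l leq_mul2l leqnSn !orbT.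
set U' := U :|: \bigcup_(j < m) P j.
have vU' : v \notin U'.
  rewrite in_setU negb_or vU /=; apply/bigcupP => -[j _].
  by have [_ /negP] := hP.1 j (ltn_ord j).
have [e eH /andP [ve eU']] : exists2 e, e \in H & (v \in e) && [disjoint e & U'].
  apply: edge_avoiding vU' (leq_ltn_trans _ hdeg).
  rewrite leq_mul2r (leq_trans (leq_card_setU _ _)) ?orbT // leq_add2l.
  by rewrite (leq_trans (card_petals hP)) // leq_mul2l leqnSn orbT.
exists [eta P with m |-> e :\ v]; split.
  apply: star_in_add_petal => //; first exact: uniform_card H_uniform eH.
  exact: disjointWr (subsetUr _ _) eU'.
apply/disjointP => x /star_vertsP [-> | [j]]; first by rewrite (negbTE vU).
rewrite /= ltnS leq_eqVlt => /predU1P [-> | jm].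
  rewrite eqxx => /setD1P [_ xe] xU; move/disjointP: eU'; apply; first exact: xe.
  by rewrite /U' in_setU xU.
rewrite (ltn_eqF jm) => xP; move/disjointP: PU; apply.
exact: star_verts_petal jm xP.
Qed.

End Degrees.

Section HighDegree.
Variables (T : finType) (r k : nat) (d : 'I_k -> nat) (H : {set {set T}}) (D : nat).
Implicit Types (I : {set 'I_k}) (c : 'I_k -> T) (P : 'I_k -> nat -> {set T}).
Hypotheses (H_uniform : uniform r H) (D_ge : ustar_order r d * 'C(#|T|, r.-2) <= D).

Lemma contains_ustar_of_centers I c P (z : 'I_k -> T) :
  star_family r d H I c P ->
  {in ~: I, forall i, D < degree H (z i)} ->
  {in ~: I &, injective z} ->
  {in ~: I, forall i, z i \notin family_verts d I c P} ->
  contains (ustar_exp r d) H.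
Proof.
move Em : #|~: I| => m; elim: m I c P Em => [|m IH] I c P Em hF zD zinj zV.
  move/eqP: Em; rewrite cards_eq0 => /eqP I_full.
  by move: hF; rewrite -[I]setCK I_full setC0; apply: contains_of_star_family.
have /card_gt0P [i0 i0I] : 0 < #|~: I| by rewrite Em.
have i0I' : i0 \notin I by rewrite -in_setC.
have notI_new : ~: (i0 |: I) = ~: I :\ i0 by rewrite setCU setDE setIC.
set U := family_verts d I c P :|: z @: (~: I :\ i0).
have zU : z i0 \notin U.
  rewrite in_setU negb_or zV //=; apply/imsetP => -[i /setD1P [ii0 iI] /(zinj _ _ i0I iI) e].
  by rewrite e eqxx in ii0.
have [P0 [hP0 P0U]] : exists P0 : nat -> {set T},
    star_in r H (z i0) P0 (d i0) /\ [disjoint star_verts (z i0) P0 (d i0) & U].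
  apply: star_of_high_degree zU _ => //; apply: leq_ltn_trans (zD i0 i0I).
  by apply: leq_trans D_ge; rewrite leq_mul2r (card_family_centers z hF i0I) orbT.
apply: (IH (i0 |: I) [eta c with i0 |-> z i0] [eta P with i0 |-> P0]).
- by move: Em; rewrite notI_new (cardsD1 i0) i0I add1n => -[].
- apply: star_family_setU1 => //; exact: disjointWr (subsetUl _ _) P0U.
- by move=> i; rewrite notI_new => /setD1P [_]; apply: zD.
- by move=> i i'; rewrite notI_new => /setD1P [_ iI] /setD1P [_ i'I]; apply: zinj.
move=> i; rewrite notI_new => iI'; have /setD1P [ii0 iI] := iI'.
rewrite family_verts_setU1 // in_setU negb_or zV // andbT.
by rewrite (disjointFl P0U) // in_setU imset_f ?orbT.
Qed.

Lemma contains_ustar_of_high_family (B : {set T}) b c P :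
  {in B, forall v, D < degree H v} -> b <= #|B| ->
  star_family r d H [set i : 'I_k | b <= i] c P ->
  [disjoint family_verts d [set i : 'I_k | b <= i] c P & B] ->
  contains (ustar_exp r d) H.
Proof.
move=> BD bB; set J := [set i : 'I_k | b <= i] => hF FB.
pose z i := nth (c i) (enum B) i.
have ltB i : i \in ~: J -> i < size (enum B).
  by rewrite !inE -ltnNge -cardE => ib; apply: leq_trans ib bB.
have zB i : i \in ~: J -> z i \in B.
  by move=> /ltB iB; rewrite -mem_enum mem_nth.
apply: (contains_ustar_of_centers (z := z) hF).
- by move=> i /zB; apply: BD.
- move=> i i' /ltB iB /ltB i'B; rewrite /z (set_nth_default (c i) (c i') i'B) => /eqP.
  by rewrite nth_uniq ?enum_uniq // => /eqP /val_inj.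
- by move=> i /zB ziB; rewrite (disjointFl FB ziB).
Qed.

End HighDegree.

Section Transport.
Variables (W1 W2 : finType) (h : W1 -> W2) (A : {set W1}) (G : {set {set W1}}).
Hypotheses (h_inj : {in A &, injective h}) (G_sub : forall e, e \in G -> e \subset A).

Lemma contains_of_imset (V : finType) (F : {set {set V}}) (w0 : W1) :
  contains F [set h @: e | e : {set W1} in G] -> contains F G.
Proof.
case/containsP => f [finj fE].
pose psi y := odflt w0 [pick a in A | h a == y].
have psiK a : a \in A -> psi (h a) = a.
  move=> aA; rewrite /psi; case: pickP => [a' /andP [a'A /eqP] | /(_ a)] /=.
    exact: h_inj.
  by rewrite aA eqxx.
have fA x : x \in cover F -> exists2 a, a \in A & f x = h a.
  move=> /bigcupP [e eF xe]; have /imsetP [e' e'G ee'] := fE e eF.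
  have : f x \in h @: e' by rewrite -ee' imset_f.
  by case/imsetP => a ae' ->; exists a => //; apply: subsetP (G_sub e'G) _ ae'.
apply/containsP; exists [ffun x => psi (f x)]; split.
  move=> x y xF yF; rewrite !ffunE.
  have [a aA fxa] := fA x xF; have [b bA fyb] := fA y yF.
  by rewrite fxa fyb !psiK // => ab; apply: finj; rewrite // fxa fyb ab.
move=> e eF; have /imsetP [e' e'G ee'] := fE e eF.
rewrite (eq_imset _ (fun x => ffunE _ x)) imset_comp ee' -imset_comp.
rewrite (eq_in_imset (g := id)) ?imset_id // => a ae /=.
exact/psiK/(subsetP (G_sub e'G)).
Qed.

Lemma card_imset_edges : #|[set h @: e | e : {set W1} in G]| = #|G|.
Proof.
apply: card_in_imset => e1 e2 e1G e2G.
have sub a b : a \in G -> b \in G -> h @: a = h @: b -> a \subset b.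
  move=> aG bG ab; apply/subsetP => x xa.
  have /imsetP [y yb hxy] : h x \in h @: b by rewrite -ab imset_f.
  by rewrite (h_inj (subsetP (G_sub aG) _ xa) (subsetP (G_sub bG) _ yb) hxy).
by move=> e12; apply/eqP; rewrite eqEsubset !sub.
Qed.

Lemma uniform_imset_edges r : uniform r G -> uniform r [set h @: e | e : {set W1} in G].
Proof.
move=> GU; apply/uniformP => _ /imsetP [e eG ->].
rewrite card_in_imset ?(uniform_card GU) // => x y xe ye.
by apply: h_inj; apply: (subsetP (G_sub eG)).
Qed.

End Transport.

Lemma card_le_ex (W V : finType) r m (F : {set {set V}}) (G : {set {set W}}) (A : {set W}) :
  0 < r -> uniform r G -> ~~ contains F G -> (forall e, e \in G -> e \subset A) ->
  #|A| <= m -> #|G| <= ex r m F.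
Proof.
move=> r_gt0 GU GF GA Am.
have [-> | /set0Pn [e eG]] := eqVneq G set0; first by rewrite cards0.
have /card_gt0P [w0 w0e] : 0 < #|e| by rewrite (uniform_card GU eG).
have w0A : w0 \in A := subsetP (GA e eG) _ w0e.
case: m Am => [|m] Am.
  by move: Am; rewrite leqn0 => /eqP/cards0_eq A0; rewrite A0 inE in w0A.
pose phi (a : W) : 'I_m.+1 := inord (index a (enum A)).
have idxA a : a \in A -> index a (enum A) < m.+1.
  by move=> aA; apply: leq_trans Am; rewrite cardE index_mem mem_enum.
have phi_inj : {in A &, injective phi}.
  move=> a b aA bA /(congr1 val); rewrite /= !inordK ?idxA // => ab.
  have aE : a \in enum A by rewrite mem_enum.
  by rewrite -(nth_index a aE) ab nth_index ?mem_enum.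
rewrite -(card_imset_edges phi_inj GA).
apply: (@leq_bigmax_cond _ (fun G' => uniform r G' && ~~ contains F G') (fun G' => #|G'|)).
rewrite (uniform_imset_edges phi_inj GA GU) /=; apply: contra GF.
exact: (contains_of_imset phi_inj GA w0).
Qed.

Lemma ex_witness r m (V : finType) (F : {set {set V}}) : F != set0 ->
  exists2 G : {set {set 'I_m}}, uniform r G && ~~ contains F G & ex r m F = #|G|.
Proof.
case/set0Pn => e0 e0F.
have empty_free : uniform r (set0 : {set {set 'I_m}}) && ~~ contains F (set0 : {set {set 'I_m}}).
  apply/andP; split; first by apply/uniformP => e; rewrite inE.
  by apply/containsP => -[f [_ /(_ e0 e0F)]]; rewrite inE.
rewrite /ex (bigmax_eq_arg (P := fun G => uniform r G && ~~ contains F G) _ empty_free).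
by case: arg_maxnP => //= G GF _; exists G.
Qed.

Lemma card_meeting_sets (T : finType) r (L : {set T}) :
  #|[set e : {set T} | (#|e| == r) && ~~ [disjoint e & L]]| = 'C(#|T|, r) - 'C(#|T| - #|L|, r).
Proof.
set R := [set e : {set T} | #|e| == r].
set S := [set e : {set T} | (#|e| == r) && [disjoint e & L]].
have cardS : #|S| = 'C(#|T| - #|L|, r).
  rewrite -(cardsC L) addKn -cards_draws.
  by apply: eq_card => e; rewrite !inE disjoints_subset andbC.
have -> : [set e : {set T} | (#|e| == r) && ~~ [disjoint e & L]] = R :\: S.
  by apply/setP => e; rewrite !inE; case: (#|e| == r); case: [disjoint e & L].
rewrite cardsD (setIidPr _) ?cardS ?card_draws //.
by apply/subsetP => e; rewrite !inE => /andP [].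
Qed.

Lemma card_uniform_le_meeting (T : finType) r (H : {set {set T}}) (L : {set T}) :
  uniform r H ->
  #|H| <= 'C(#|T|, r) - 'C(#|T| - #|L|, r) + #|[set e in H | [disjoint e & L]]|.
Proof.
move=> HU; rewrite -card_meeting_sets -(cardsID [set e : {set T} | [disjoint e & L]] H) addnC.
apply: leq_add; apply/subset_leq_card/subsetP => e; rewrite !inE.
  by case/andP => eL eH; rewrite (uniform_card HU eH) eqxx eL.
by case/andP => -> ->.
Qed.

Section LowDegree.
Variables (T : finType) (r k : nat) (d : 'I_k -> nat) (H : {set {set T}}).
Variables (B : {set T}) (D : nat) (J : {set 'I_k}) (dd m : nat).
Hypotheses (r_gt0 : 0 < r) (H_uniform : uniform r H) (dd_gt0 : 0 < dd).
Hypothesis B_low : {in ~: B, forall u, degree H u <= D}.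
Implicit Types (I : {set 'I_k}) (c : 'I_k -> T) (P : 'I_k -> nat -> {set T}).
Hypothesis J_incompletable : forall c P,
  star_family r d H J c P -> [disjoint family_verts d J c P & B] -> False.

(* Each copy of S^+_dd among the edges avoiding X is cut down to the next missing
   star of J and its vertices are added to X; this loses at most ustar_order * D
   edges because those vertices have low degree, and J can never be completed. *)
Lemma card_avoiding_le_ex I c P (X : {set T}) :
  I \subset J -> {in J :\: I, forall i, d i <= dd} ->
  star_family r d H I c P -> [disjoint family_verts d I c P & B] ->
  B :|: family_verts d I c P \subset X -> #|~: X| <= m ->
  #|[set e in H | [disjoint e & X]]|
    <= ex r m (star_exp r dd) + #|J :\: I| * (ustar_order r d * D).
Proof.
move En : #|J :\: I| => n; elim: n I c P X En => [|n IH] I c P X En IJ ddJ hF FB FX Xm.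
  have IJ' : I = J by apply/eqP; rewrite eqEsubset IJ -setD_eq0 -cards_eq0 En.
  by subst I; case: (J_incompletable hF FB).
set G := [set e in H | [disjoint e & X]].
have GH : G \subset H by apply/subsetP => e; rewrite inE => /andP [].
have GX e : e \in G -> [disjoint e & X] by rewrite inE => /andP [].
have [cG | ncG] := boolP (contains (star_exp r dd) G); last first.
  apply: leq_trans (leq_addr _ _).
  apply: (card_le_ex r_gt0 (uniform_subset GH H_uniform) ncG _ Xm).
  by move=> e /GX; rewrite disjoints_subset.
have [c0 [P0 hP0]] := star_in_of_contains dd_gt0 cG.
have /card_gt0P [i0 i0JI] : 0 < #|J :\: I| by rewrite En.
have /setDP [i0J i0I] := i0JI.
have di0 := ddJ i0 i0JI.
set V := star_verts c0 P0 (d i0).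
have VX : [disjoint V & X].
  exact: disjointWl (star_verts_leq c0 P0 di0) (star_in_disjoint hP0 dd_gt0 GX).
have hPH : star_in r H c0 P0 (d i0) := star_in_leq di0 (star_in_subset GH hP0).
have JI' : J :\: (i0 |: I) = (J :\: I) :\ i0 by rewrite setDDl setUC.
have cardG : #|G| <= #|[set e in H | [disjoint e & X :|: V]]| + ustar_order r d * D.
  apply: leq_trans (@card_avoiding_setU _ H X V D _) _.
    move=> u uV; apply: B_low; rewrite inE.
    by rewrite (disjointFr (disjointWr (subset_trans (subsetUl B _) FX) VX) uV).
  by rewrite leq_add2l leq_mul2r (card_star_verts_le_order hPH) orbT.
apply: leq_trans cardG _; rewrite mulSn addnCA [_ + ustar_order r d * D]addnC leq_add2l.
apply: (IH (i0 |: I) [eta c with i0 |-> c0] [eta P with i0 |-> P0] (X :|: V)).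
- by move: En; rewrite JI' (cardsD1 i0) i0JI add1n => -[].
- by rewrite subUset sub1set i0J IJ.
- by move=> i; rewrite JI' => /setD1P [_]; apply: ddJ.
- apply: star_family_setU1 => //.
  exact: disjointWr (subset_trans (subsetUr B _) FX) VX.
- rewrite family_verts_setU1 // disjoints_subset subUset -!disjoints_subset FB andbT.
  exact: disjointWr (subset_trans (subsetUl B _) FX) VX.
- by rewrite family_verts_setU1 // setUCA setUC; apply: setSU.
- by apply: leq_trans Xm; apply/subset_leq_card; rewrite setCS subsetUl.
Qed.

End LowDegree.

Section SmallTransversal.
Variables (T : finType) (r k : nat) (d : 'I_k -> nat) (H : {set {set T}}).
Hypothesis d_gt0 : forall i, 0 < d i.

Definition tag_star j (v : star_vert (d j) r) : ustar_vert r d :=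
  Tagged (fun i => star_vert (d i) r) v.

Lemma tag_star_edge j (e : {set star_vert (d j) r}) :
  e \in star_exp r (d j) -> @tag_star j @: e \in ustar_exp r d.
Proof. by move=> eS; apply/bigcupP; exists j => //; apply: imset_f. Qed.

Lemma cover_ustar_exp (x : ustar_vert r d) : x \in cover (ustar_exp r d).
Proof.
case: x => j v; have /bigcupP [e eS ve] := cover_star_exp v (d_gt0 j).
by apply/bigcupP; exists (@tag_star j @: e); [apply: tag_star_edge | apply: imset_f].
Qed.

Lemma ustar_copy_meets (f : {ffun ustar_vert r d -> T}) (L : {set T}) m j :
  injective f -> (forall e, e \in ustar_exp r d -> f @: e \in H) ->
  ~~ contains (star_exp r m) [set e in H | [disjoint e & L]] -> m <= d j ->
  exists v : star_vert (d j) r, f (tag_star v) \in L.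
Proof.
(* Otherwise star j, cut down to m petals, is a copy of S^+_m avoiding L. *)
move=> finj fE nF mj.
have [/existsP // | /existsPn nv] := boolP [exists v, f (@tag_star j v) \in L].
pose emb (v : star_vert m r) : star_vert (d j) r :=
  if v is Some (a, t) then Some (widen_ord mj a, t) else None.
have emb_inj : injective emb by case=> [[a t] |] [[a' t'] |] //= [/val_inj -> ->].
case/negP: nF; apply/containsP; exists [ffun v => f (tag_star (emb v))]; split.
  move=> x y _ _; rewrite !ffunE => /finj exy; apply: emb_inj; exact: eq_from_Tagged exy.
move=> _ /imsetP [a _ ->].
have -> : [ffun v => f (tag_star (emb v))] @: star_edge r a =
          f @: (@tag_star j @: star_edge r (widen_ord mj a)).
  rewrite /star_edge !imsetU1 ffunE; congr (_ |: _); rewrite -!imset_comp.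
  by apply: eq_imset => t; rewrite /= ffunE.
rewrite inE fE ?tag_star_edge ?imset_f //=.
by apply/disjointP => _ /imsetP [_ /imsetP [v _ ->] ->]; apply/negP/nv.
Qed.

Lemma ustar_free_of_small_transversal (L : {set T}) m :
  ~~ contains (star_exp r m) [set e in H | [disjoint e & L]] ->
  #|L| < #|[set j | m <= d j]| -> ~~ contains (ustar_exp r d) H.
Proof.
move=> nF Lsmall; apply/negP => /containsP [f [finj0 fE]].
have finj : injective f by move=> x y; apply: finj0; apply: cover_ustar_exp.
pose phi j := f (tag_star (odflt None [pick v | f (@tag_star j v) \in L])).
have phiL j : j \in [set j | m <= d j] -> phi j \in L.
  rewrite inE => /(ustar_copy_meets finj fE nF) [v fv]; rewrite /phi.
  by case: pickP => [v' // | /(_ v)]; rewrite fv.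
have phi_inj : {in [set j | m <= d j] &, injective phi}.
  by move=> j j' _ _ /finj /(congr1 tag).
have : #|phi @: [set j | m <= d j]| <= #|L|.
  by apply/subset_leq_card/subsetP => _ /imsetP [j jm ->]; apply: phiL.
by rewrite card_in_imset // leqNgt Lsmall.
Qed.

End SmallTransversal.

Fact shift_ord_subproof n i (x : 'I_(n - i)) : x + i < n.
Proof. by have := ltn_ord x; lia. Qed.

Definition shift_ord n i (x : 'I_(n - i)) : 'I_n := Ordinal (shift_ord_subproof x).

Lemma shift_ord_inj n i : injective (@shift_ord n i).
Proof. by move=> x y [] /eqP; rewrite eqn_add2r => /eqP /val_inj. Qed.

Lemma ex_ustar_ge n r k (d : 'I_k -> nat) (i : 'I_k) :
  0 < r -> (forall j, 0 < d j) -> (forall a b : 'I_k, a <= b -> d b <= d a) -> i < n ->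
  'C(n, r) - 'C(n - i, r) + ex r (n - i) (star_exp r (d i)) <= ex r n (ustar_exp r d).
Proof.
move=> r_gt0 d_gt0 d_noninc i_lt_n.
have [G /andP [GU GF] ->] := ex_witness r (n - i) (star_exp_neq0 r (d_gt0 i)).
have w0 : 'I_(n - i) by exists 0; rewrite subn_gt0.
have shift_inj : {in setT &, injective (@shift_ord n i)} by move=> x y _ _ /shift_ord_inj.
have GT e : e \in G -> e \subset setT by move=> _; apply: subsetT.
pose L := [set x : 'I_n | x < i].
pose G' := [set @shift_ord n i @: e | e : {set 'I_(n - i)} in G].
have G'L e : e \in G' -> [disjoint e & L].
  by case/imsetP => e0 _ ->; apply/disjointP => _ /imsetP [y _ ->]; rewrite inE ltnNge leq_addl.
pose Hi := [set e : {set 'I_n} | (#|e| == r) && ~~ [disjoint e & L]] :|: G'.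
have cardHi : #|Hi| = 'C(n, r) - 'C(n - i, r) + #|G|.
  have meetG'0 : [set e : {set 'I_n} | (#|e| == r) && ~~ [disjoint e & L]] :&: G' = set0.
    by apply/setP => e; rewrite !inE; apply/negP => /andP [/andP [_ /negP eL] /G'L].
  rewrite /Hi cardsU meetG'0 cards0 subn0 card_meeting_sets card_ord card_ord_lt ?(ltnW i_lt_n) //.
  by rewrite (card_imset_edges shift_inj GT).
rewrite -cardHi.
apply: (@leq_bigmax_cond _ (fun H => uniform r H && ~~ contains _ H) (fun H => #|H|)).
apply/andP; split.
  apply/uniformP => e; rewrite inE => /orP [| eG']; first by rewrite inE => /andP [/eqP].
  exact: uniform_card (uniform_imset_edges shift_inj GT GU) eG'.
apply: (ustar_free_of_small_transversal d_gt0 (L := L) (m := d i)).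
  apply: contra GF => cHi; apply: (contains_of_imset shift_inj GT w0).
  apply: contains_subset cHi; apply/subsetP => e.
  rewrite /Hi !inE => /andP [/orP [/andP [_ /negP eL'] | //] eL].
  by case: (eL' eL).
rewrite card_ord_lt ?(ltnW i_lt_n) //.
apply: leq_trans (subset_leq_card (_ : [set j : 'I_k | j < i.+1] \subset _)).
  by rewrite card_ord_lt.
by apply/subsetP => j; rewrite !inE ltnS => /d_noninc.
Qed.

Lemma bin_sub_absorb n b r E Z : 0 < r -> b < n -> Z <= 'C(n - b.+1, r.-1) ->
  'C(n, r) - 'C(n - b, r) + (E + Z) <= 'C(n, r) - 'C(n - b.+1, r) + E.
Proof.
move=> r_gt0 bn ZC.
have pascal : 'C(n - b, r) = 'C(n - b.+1, r) + 'C(n - b.+1, r.-1).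
  by rewrite -(subnSK bn); case: r r_gt0 {ZC} => // r _; rewrite binS.
have := leq_bin2l r (leq_subr b n); lia.
Qed.

Section UpperBound.
Variables (n r k : nat) (d : 'I_k -> nat) (H : {set {set 'I_n}}).
Hypotheses (r_gt0 : 0 < r) (d_gt0 : forall i, 0 < d i)
  (d_noninc : forall i j : 'I_k, i <= j -> d j <= d i)
  (H_uniform : uniform r H) (H_free : ~~ contains (ustar_exp r d) H) (k_lt_n : k < n).

Let D := ustar_order r d * 'C(n, r.-2).
Let B := [set v | D < degree H v].
Let H' := [set e in H | [disjoint e & B]].

Fact D_ge : ustar_order r d * 'C(#|'I_n|, r.-2) <= D. Proof. by rewrite card_ord. Qed.
Fact B_high : {in B, forall v, D < degree H v}. Proof. by move=> v; rewrite inE. Qed.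
Fact B_low : {in ~: B, forall u, degree H u <= D}. Proof. by move=> u; rewrite !inE -leqNgt. Qed.
Fact H'_sub : H' \subset H. Proof. by apply/subsetP => e; rewrite inE => /andP []. Qed.

Lemma high_degree_lt : #|B| < k.
Proof.
rewrite ltnNge; apply/negP => kB; apply: (negP H_free).
have v0 : 'I_n := Ordinal k_lt_n.
have no_index : [set i : 'I_k | k <= i] = set0.
  by apply/setP => i; rewrite !inE leqNgt ltn_ord.
have hF : star_family r d H [set i : 'I_k | k <= i] (fun _ => v0) (fun _ _ => set0).
  by rewrite no_index; split=> i; rewrite inE.
have FB : [disjoint family_verts d [set i : 'I_k | k <= i] (fun _ => v0) (fun _ _ => set0) & B].
  by rewrite no_index /family_verts big_set0; apply/disjointP => x; rewrite inE.
exact: (contains_ustar_of_high_family H_uniform D_ge B_high kB hF FB).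
Qed.

Lemma high_family_incompletable c P :
  star_family r d H [set i : 'I_k | #|B| <= i] c P ->
  [disjoint family_verts d [set i : 'I_k | #|B| <= i] c P & B] -> False.
Proof.
move=> hF FB; apply: (negP H_free).
exact: (contains_ustar_of_high_family H_uniform D_ge B_high (leqnn _) hF FB).
Qed.

Lemma star_family_off_high (i : 'I_k) c0 P0 : star_in r H' c0 P0 (d i) ->
  star_family r d H [set i] (fun _ => c0) (fun _ => P0) /\
  [disjoint family_verts d [set i] (fun _ => c0) (fun _ => P0) & B].
Proof.
move=> hP0; split; first exact/star_family1/(star_in_subset H'_sub).
rewrite family_verts1; apply: star_in_disjoint hP0 (d_gt0 i) _.
by move=> e; rewrite inE => /andP [].
Qed.

Lemma card_off_high_le (i j : 'I_k) c0 P0 :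
  val i = #|B| -> val j = i.+1 -> star_in r H' c0 P0 (d i) ->
  #|H'| <= ex r (n - j) (star_exp r (d j)) + k.+1 * (ustar_order r d * D).
Proof.
move=> iB ji hP0; have [hF FB] := star_family_off_high hP0.
set V0 := star_verts c0 P0 (d i); set X := B :|: V0.
have V0B : [disjoint V0 & B] by move: FB; rewrite family_verts1.
have hP0H : star_in r H c0 P0 (d i) := star_in_subset H'_sub hP0.
have cardX : #|~: X| <= n - j.
  have c0B : c0 \notin B by rewrite (disjointFr V0B (star_verts_center _ _ _)).
  have : #|c0 |: B| <= #|X| by rewrite subset_leq_card // setUC setUS // sub1set star_verts_center.
  by rewrite cardsU1 c0B ji iB; have := cardsC X; rewrite card_ord; lia.
have cardG := card_avoiding_le_ex r_gt0 H_uniform (d_gt0 j) B_low high_family_incompletable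
  (I := [set i]) (X := X) _ _ hF FB _ cardX.
have cardH' : #|H'| <= #|[set e in H | [disjoint e & X]]| + ustar_order r d * D.
  apply: leq_trans (@card_avoiding_setU _ H B V0 D _) _.
    by move=> u uV; apply: B_low; rewrite inE (disjointFr V0B uV).
  by rewrite leq_add2l leq_mul2r (card_star_verts_le_order hP0H) orbT.
apply: leq_trans cardH' _; rewrite mulSn addnCA [_ + ustar_order r d * D]addnC leq_add2l.
apply: leq_trans (cardG _ _ _) _.
- by rewrite sub1set inE iB.
- move=> i'; rewrite !inE => /andP [i'i iBi']; apply: d_noninc; rewrite ji ltn_neqAle.
  by rewrite iB iBi' andbT -iB; apply: contraNneq i'i => /val_inj ->.
- by rewrite family_verts1.
by rewrite leq_add2l leq_mul2r -[k in _ <= k]card_ord max_card orbT.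
Qed.

Lemma card_ustar_free_le : k.+1 * (ustar_order r d * D) <= 'C(n - k, r.-1) ->
  #|H| <= \max_(i < k) ('C(n, r) - 'C(n - i, r) + ex r (n - i) (star_exp r (d i))).
Proof.
move=> slack; pose i := Ordinal high_degree_lt.
apply: leq_trans (card_uniform_le_meeting B H_uniform) _; rewrite card_ord.
have [cH' | ncH'] := boolP (contains (star_exp r (d i)) H'); last first.
  apply: leq_trans _ (leq_bigmax i); rewrite leq_add2l.
  apply: (card_le_ex r_gt0 (uniform_subset H'_sub H_uniform) ncH' (A := ~: B)).
    by move=> e; rewrite inE disjoints_subset => /andP [].
  by rewrite -[n in _ <= n - _](card_ord n) -(cardsC B) addKn.
have [c0 [P0 hP0]] := star_in_of_contains (d_gt0 i) cH'.
have [ik | ki] := ltnP i.+1 k; last first.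
  have [hF FB] := star_family_off_high hP0.
  have top : [set i' : 'I_k | #|B| <= i'] = [set i].
    apply/setP => i'; rewrite !inE -val_eqE /= eqn_leq.
    suff -> : i' <= #|B| by [].
    by rewrite -ltnS; apply: leq_trans (ltn_ord i') ki.
  by rewrite -top in hF FB; case: (high_family_incompletable hF FB).
apply: leq_trans _ (leq_bigmax (Ordinal ik)) => /=.
apply: leq_trans (leq_add (leqnn _) (@card_off_high_le i (Ordinal ik) c0 P0 erefl erefl hP0)) _.
apply: bin_sub_absorb r_gt0 (ltn_trans high_degree_lt k_lt_n) _.
by apply: leq_trans slack _; apply/leq_bin2l/leq_sub2l/ltnW.
Qed.

End UpperBound.

Lemma leq_bin_succ_double m j : 2 * j <= m -> 'C(m.+1, j) <= 2 * 'C(m, j).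
Proof.
move=> jm; have pos : 0 < m.+1 - j by lia.
rewrite -(leq_pmul2l pos) -[X in X <= _](mul_bin_down m.+1 j) mulnA.
by apply: leq_mul => //; lia.
Qed.

Lemma leq_bin_addn_exp2 k m j : 2 * j <= m -> 'C(m + k, j) <= 2 ^ k * 'C(m, j).
Proof.
elim: k => [|k IH] jm; first by rewrite addn0 mul1n.
rewrite addnS expnS -mulnA; apply: leq_trans (leq_bin_succ_double _) _; first lia.
by rewrite leq_mul2l IH // orbT.
Qed.

Lemma bin_dominates_eventually A k j :
  exists N, forall n, N <= n -> A * 'C(n, j) <= 'C(n - k, j.+1).
Proof.
exists (k + 2 * j + j + A * 2 ^ k * j.+1 + 1) => n hn.
have jnk : 2 * j <= n - k by lia.
rewrite -(leq_pmul2l (ltn0Sn j)) mul_bin_left.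
apply: (@leq_trans (j.+1 * (A * (2 ^ k * 'C(n - k, j))))).
  have n_split : n = (n - k) + k by lia.
  by rewrite !leq_mul2l {1}n_split leq_bin_addn_exp2 ?orbT.
rewrite !mulnA leq_mul2r; apply/orP; right.
move: hn; rewrite (mulnC j.+1) -mulnA (mulnC _ j.+1) mulnA; lia.
Qed.

Unset Implicit Arguments.

Theorem theorem1p5 (k r : nat) (d : 'I_k -> nat) :
  1 <= k -> 2 <= r ->
  (forall i, 0 < d i) ->
  (forall i j : 'I_k, i <= j -> d j <= d i) ->
  exists N, forall n, N <= n ->
    ex r n (ustar_exp r d) =
    \max_(i < k) ('C(n, r) - 'C(n - i, r) + ex r (n - i) (star_exp r (d i))).
Proof.
move=> _ r_ge2 d_gt0 d_noninc; set s := ustar_order r d.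
have [N hN] := bin_dominates_eventually (k.+1 * s * s) k r.-2.
exists (N + k.+1) => n n_large.
have k_lt_n : k < n by lia.
have r_gt0 : 0 < r by lia.
apply/eqP; rewrite eqn_leq; apply/andP; split.
  apply/bigmax_leqP => H /andP [H_uniform H_free]; apply: card_ustar_free_le => //.
  have -> : r.-1 = (r.-2).+1 by lia.
  by rewrite !mulnA; apply: hN; lia.
apply/bigmax_leqP => i _; apply: ex_ustar_ge => //.
exact: leq_trans (ltn_ord i) (ltnW k_lt_n).
Qed.
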